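(* Let $Z,A\in\mathfrak m_0$ with $\mathrm{ad}_Z^2A=\nu_1A$ and $\mathrm{ad}_{JZ}^2A=\nu_2A$ (where $\nu_1,\nu_2\ge0$). Then $A$ is an eigenvector of $E_Z$, $E_{JZ}$, $S_Z$, $S_{JZ}$ with eigenvalues $\frac{\sinh\sqrt{\nu_1}}{\sqrt{\nu_1}}$, $\frac{\sinh\sqrt{\nu_2}}{\sqrt{\nu_2}}$, $\cosh\sqrt{\nu_1}$, $\cosh\sqrt{\nu_2}$ respectively, and $JA$ is an eigenvector of $E_Z$, $E_{JZ}$, $S_Z$, $S_{JZ}$ with eigenvalues $\frac{\sinh\sqrt{\nu_2}}{\sqrt{\nu_2}}$, $\frac{\sinh\sqrt{\nu_1}}{\sqrt{\nu_1}}$, $\cosh\sqrt{\nu_2}$, $\cosh\sqrt{\nu_1}$ respectively.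
   Context: Let $G$ be a simple complex algebraic group with commuting antiholomorphic involutions $\sigma,\theta$, $G_u=G^\theta$ maximal compact, $G_0=G^\sigma$, $K=G^{\sigma\theta}$, $K_0=K\cap G_0$. $\mathfrak g=\mathfrak k\oplus\mathfrak m$ is the $\pm1$-eigenspace decomposition of $\sigma\theta$, $\mathfrak m_0=\mathfrak m\cap\mathfrak g_0$. Assume $G_u/K_0$ is an irreducible Hermitian symmetric space of compact type; $\Upsilon$ is in the center of $\mathfrak k\cap\mathfrak g_0$ with $\mathrm{ad}_\Upsilon$ having eigenvalues $\pm i$ on $\mathfrak m$; $J=\mathrm{ad}_\Upsilon|_{\mathfrak m}$ (preserving $\mathfrak m_0$). For $Y\in\mathfrak m_0$: $E_Y=\sum_{n\ge0}\frac{\mathrm{ad}_Y^{2n}}{(2n+1)!}$, $S_Y=\sum_{n\ge0}\frac{\mathrm{ad}_Y^{2n}}{(2n)!}$, acting on $\mathfrak m_0$. The expression $\frac{\sinh\sqrt\nu}{\sqrt\nu}$ is interpreted as $1$ when $\nu=0$. For $Y\in\mathfrak m_0$, $\mathrm{ad}_Y^2$ is diagonalizable on $\mathfrak m_0$ with nonnegative real eigenvalues. *)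

From HB Require Import structures.
From mathcomp Require Import all_boot all_order all_algebra.
From mathcomp Require Import all_classical all_reals all_analysis.
Set Implicit Arguments. Unset Strict Implicit. Unset Printing Implicit Defensive.
Import Order.TTheory GRing.Theory Num.Theory.
Import numFieldNormedType.Exports.
Local Open Scope ring_scope.

Definition sinhR (R : realType) (x : R) : R := (expR x - expR (- x)) / 2.
Definition coshR (R : realType) (x : R) : R := (expR x + expR (- x)) / 2.

Definition sinhc (R : realType) (nu : R) : R :=
  if nu == 0 then 1 else sinhR (Num.sqrt nu) / Num.sqrt nu.

(* The real Lie algebra g_0 is modelled as 'rV[R]_n with a bracket [br].
   [ad br Y k X] = ad_Y^k X. *)
Definition ad (R : realType) (n : nat) (br : 'rV[R]_n -> 'rV[R]_n -> 'rV[R]_n)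
  (Y : 'rV[R]_n) (k : nat) (X : 'rV[R]_n) : 'rV[R]_n := iter k (br Y) X.

(* Partial sums of E_Y X = sum_{k>=0} ad_Y^{2k} X / (2k+1)!  *)
Definition E_partial (R : realType) (n : nat) (br : 'rV[R]_n -> 'rV[R]_n -> 'rV[R]_n)
  (Y X : 'rV[R]_n) (N : nat) : 'rV[R]_n :=
  \sum_(k < N) (((2 * k).+1)`!%:R)^-1 *: ad br Y (2 * k) X.

(* Partial sums of S_Y X = sum_{k>=0} ad_Y^{2k} X / (2k)!  *)
Definition S_partial (R : realType) (n : nat) (br : 'rV[R]_n -> 'rV[R]_n -> 'rV[R]_n)
  (Y X : 'rV[R]_n) (N : nat) : 'rV[R]_n :=
  \sum_(k < N) (((2 * k))`!%:R)^-1 *: ad br Y (2 * k) X.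

(* Structural data of the setting, restricted to the real form g_0:
   - br is a real Lie bracket on g_0 (bilinear, antisymmetric, Jacobi);
   - g_0 = k_0 (+) m_0 (row spaces K, M) is the Cartan-type decomposition
     ( [k_0,k_0] <= k_0, [k_0,m_0] <= m_0, [m_0,m_0] <= k_0 );
   - Ups lies in k_0 and is central in k_0;
   - ad_Ups preserves m_0 and has eigenvalues +-i on m (i.e. ad_Ups is
     semisimple with ad_Ups^2 = -1 on m_0). *)
Record hermitian_data (R : realType) (n : nat)
  (br : 'rV[R]_n -> 'rV[R]_n -> 'rV[R]_n) (K M : 'M[R]_n) (Ups : 'rV[R]_n)
  : Prop := HermitianData {
  hd_linl : forall (a : R) (x y z : 'rV[R]_n), br (a *: x + y) z = a *: br x z + br y z;
  hd_antisym : forall x y, br x y = - br y x;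
  hd_jacobi : forall x y z, br x (br y z) = br (br x y) z + br y (br x z);
  hd_sum : (K + M == (1%:M : 'M[R]_n))%MS;
  hd_cap : (K :&: M == (0 : 'M[R]_n))%MS;
  hd_kk : forall x y, (x <= K)%MS -> (y <= K)%MS -> (br x y <= K)%MS;
  hd_km : forall x y, (x <= K)%MS -> (y <= M)%MS -> (br x y <= M)%MS;
  hd_mm : forall x y, (x <= M)%MS -> (y <= M)%MS -> (br x y <= K)%MS;
  hd_UpsK : (Ups <= K)%MS;
  hd_Ups_central : forall x, (x <= K)%MS -> br Ups x = 0;
  hd_J2 : forall x, (x <= M)%MS -> br Ups (br Ups x) = - x
}.

(* J = ad_Ups on m_0 *)
Definition Jop (R : realType) (n : nat) (br : 'rV[R]_n -> 'rV[R]_n -> 'rV[R]_n)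
  (Ups X : 'rV[R]_n) : 'rV[R]_n := br Ups X.

From HB Require Import structures.
From mathcomp Require Import all_boot all_order all_algebra.
From mathcomp Require Import all_classical all_reals all_analysis.
From mathcomp Require Import lra.
Import Order.TTheory GRing.Theory Num.Theory.
Import numFieldNormedType.Exports.
Local Open Scope classical_set_scope.
Local Open Scope ring_scope.

(* Since J = ad_Ups is a derivation vanishing on k_0, which contains [m_0, m_0],
   we get [Jw, x] = - [w, Jx] on m_0, and J commutes with ad_w on k_0.  With
   J^2 = -1 on m_0 this gives ad_Z^2 (JA) = J ad_JZ^2 A and
   ad_JZ^2 (JA) = J ad_Z^2 A, so JA is an eigenvector of ad_Z^2 and ad_JZ^2 with
   the eigenvalues of A swapped.  On an eigenvector of ad_Y^2 with eigenvalue
   nu >= 0 the series E_Y and S_Y reduce to the scalar series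
   sum nu^k/(2k+1)! and sum nu^k/(2k)!, the odd and even parts of the
   exponential series at sqrt nu. *)

Lemma sum_even_odd (V : nmodType) (f : nat -> V) N :
  \sum_(0 <= i < 2 * N) f i = \sum_(k < N) (f (2 * k)%N + f (2 * k).+1).
Proof.
elim: N => [|N IH]; first by rewrite big_geq // big_ord0.
by rewrite mulnS add2n !big_nat_recr //= big_ord_recr -IH -addrA.
Qed.

Section HyperbolicSeries.
Variable R : realType.
Implicit Types s nu : R.

Lemma cvg_series_exp_coeff_even_index s :
  series (exp_coeff s) (2 * N)%N @[N --> \oo] --> expR s.
Proof. exact: cvg_comp (cvg_mulnl 2 isT) (is_cvg_series_exp_coeff s). Qed.

Lemma series_exp_coeff_even_terms s N :
  \sum_(k < N) exp_coeff s (2 * k)%N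
  = (series (exp_coeff s) (2 * N)%N + series (exp_coeff (- s)) (2 * N)%N) / 2.
Proof.
rewrite /series /= !sum_even_odd -big_split mulr_suml.
apply: eq_bigr => k _; rewrite /exp_coeff /= !exprS !exprM sqrrN; lra.
Qed.

Lemma series_exp_coeff_odd_terms s N :
  \sum_(k < N) exp_coeff s (2 * k).+1
  = (series (exp_coeff s) (2 * N)%N - series (exp_coeff (- s)) (2 * N)%N) / 2.
Proof.
rewrite /series /= !sum_even_odd -sumrB mulr_suml.
apply: eq_bigr => k _; rewrite /exp_coeff /= !exprS !exprM sqrrN; lra.
Qed.

Lemma cvg_cosh_series s :
  \sum_(k < N) exp_coeff s (2 * k)%N @[N --> \oo] --> coshR s.
Proof.
under eq_fun do rewrite series_exp_coeff_even_terms.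
apply: cvgMr_tmp; apply: cvgD; exact: cvg_series_exp_coeff_even_index.
Qed.

Lemma cvg_sinh_series s :
  \sum_(k < N) exp_coeff s (2 * k).+1 @[N --> \oo] --> sinhR s.
Proof.
under eq_fun do rewrite series_exp_coeff_odd_terms.
apply: cvgMr_tmp; apply: cvgB; exact: cvg_series_exp_coeff_even_index.
Qed.

Lemma cvg_cosh_sqrt_series nu : 0 <= nu ->
  \sum_(k < N) ((2 * k)`!%:R)^-1 * nu ^+ k @[N --> \oo]
  --> coshR (Num.sqrt nu).
Proof.
move=> nu_ge0.
have -> : (fun N => \sum_(k < N) ((2 * k)`!%:R)^-1 * nu ^+ k)
          = fun N => \sum_(k < N) exp_coeff (Num.sqrt nu) (2 * k)%N.
  apply/funext => N; apply: eq_bigr => k _.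
  by rewrite /exp_coeff /= exprM sqr_sqrtr // mulrC.
exact: cvg_cosh_series.
Qed.

Lemma cvg_sinhc_series nu : 0 <= nu ->
  \sum_(k < N) ((2 * k).+1`!%:R)^-1 * nu ^+ k @[N --> \oo] --> sinhc nu.
Proof.
rewrite /sinhc; have [-> _|nu_neq0 nu_ge0] := eqVneq nu 0.
  apply: cvg_near_cst; near=> N.
  have /prednK <- : (0 < N)%N by near: N; exists 1%N.
  rewrite big_ord_recl big1 => [|k _]; last by rewrite expr0n mulr0.
  by rewrite expr0 mulr1 invr1 addr0.
have sqrt_gt0 : 0 < Num.sqrt nu by rewrite sqrtr_gt0 lt_def nu_neq0.
have -> : (fun N => \sum_(k < N) ((2 * k).+1`!%:R)^-1 * nu ^+ k)
          = fun N => (\sum_(k < N) exp_coeff (Num.sqrt nu) (2 * k).+1)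
                     / Num.sqrt nu.
  apply/funext => N; rewrite mulr_suml; apply: eq_bigr => k _.
  by rewrite /exp_coeff /= exprSr exprM sqr_sqrtr // mulrAC mulfK ?gt_eqF // mulrC.
exact: cvgMr_tmp (cvg_sinh_series _).
Unshelve. all: by end_near.
Qed.

End HyperbolicSeries.

Section EvenIterates.
Context {R : pzRingType} {V : lmodType R} {f : V -> V} {x : V} {nu : R}.
Hypotheses (fZ : scalable f) (f2x : f (f x) = nu *: x).

Lemma iter_even_eigen k : iter (2 * k) f x = nu ^+ k *: x.
Proof.
elim: k => [|k IH]; first by rewrite scale1r.
by rewrite mulnS add2n /= IH !fZ f2x scalerA exprSr.
Qed.

Lemma sum_scale_iter_even N (c : 'I_N -> R) :
  \sum_(k < N) c k *: iter (2 * k) f x = (\sum_(k < N) c k * nu ^+ k) *: x.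
Proof.
by rewrite scaler_suml; apply: eq_bigr => k _; rewrite iter_even_eigen scalerA.
Qed.

End EvenIterates.

Section CvgIterEven.
Context {R : realType} {V : normedModType R} {f : V -> V} {x : V} {nu : R}.
Hypotheses (fZ : scalable f) (nu_ge0 : 0 <= nu) (f2x : f (f x) = nu *: x).

Lemma cvg_sinhc_iter_even :
  \sum_(k < N) ((2 * k).+1`!%:R)^-1 *: iter (2 * k) f x @[N --> \oo]
  --> sinhc nu *: x.
Proof.
rewrite (eq_cvg _ _ (fun N => sum_scale_iter_even fZ f2x N _)).
apply: cvgZr_tmp; exact: cvg_sinhc_series.
Qed.

Lemma cvg_cosh_iter_even :
  \sum_(k < N) ((2 * k)`!%:R)^-1 *: iter (2 * k) f x @[N --> \oo]
  --> coshR (Num.sqrt nu) *: x.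
Proof.
rewrite (eq_cvg _ _ (fun N => sum_scale_iter_even fZ f2x N _)).
apply: cvgZr_tmp; exact: cvg_cosh_sqrt_series.
Qed.

End CvgIterEven.

Section HermitianData.
Context {R : realType} {n : nat} {br : 'rV[R]_n -> 'rV[R]_n -> 'rV[R]_n}.
Context {K M : 'M[R]_n} {Ups : 'rV[R]_n}.
Hypothesis HD : hermitian_data br K M Ups.
Local Notation J := (Jop br Ups).

Lemma br0l z : br 0 z = 0.
Proof.
have := hd_linl HD 1 0 0 z; rewrite scaler0 addr0 scale1r => e.
by apply: (addrI (br 0 z)); rewrite addr0 -e.
Qed.

Lemma br0r z : br z 0 = 0.
Proof. by rewrite (hd_antisym HD) br0l oppr0. Qed.

Lemma brZl c x z : br (c *: x) z = c *: br x z.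
Proof. by have := hd_linl HD c x 0 z; rewrite addr0 br0l addr0. Qed.

Lemma brZr z : scalable (br z).
Proof. by move=> c x; rewrite (hd_antisym HD) brZl -scalerN -(hd_antisym HD). Qed.

Lemma brNl x z : br (- x) z = - br x z.
Proof. by rewrite -scaleN1r brZl scaleN1r. Qed.

Lemma brNr x z : br z (- x) = - br z x.
Proof. by rewrite -scaleN1r brZr scaleN1r. Qed.

Lemma br_subM_K x y : (x <= M)%MS -> (y <= K)%MS -> (br x y <= M)%MS.
Proof. by move=> xM yK; rewrite (hd_antisym HD) eqmx_opp (hd_km HD). Qed.

Lemma Jop_subM x : (x <= M)%MS -> (J x <= M)%MS.
Proof. exact: (hd_km HD (hd_UpsK HD)). Qed.

Lemma Jop_Jop x : (x <= M)%MS -> J (J x) = - x.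
Proof. exact: (hd_J2 HD). Qed.

Lemma br_Jop_r w x : (w <= M)%MS -> (x <= M)%MS -> br w (J x) = - br (J w) x.
Proof.
move=> wM xM; have := hd_jacobi HD Ups w x.
rewrite /Jop (hd_Ups_central HD) ?(hd_mm HD) // => /eqP.
by rewrite eq_sym addrC addr_eq0 => /eqP.
Qed.

Lemma Jop_br_K w y : (y <= K)%MS -> J (br w y) = br (J w) y.
Proof. by move=> yK; rewrite /Jop (hd_jacobi HD) (hd_Ups_central HD yK) br0r addr0. Qed.

Lemma ad2_Z_JA {Z A : 'rV[R]_n} {nu : R} : (Z <= M)%MS -> (A <= M)%MS ->
  ad br (J Z) 2 A = nu *: A -> ad br Z 2 (J A) = nu *: J A.
Proof.
rewrite /ad /= => ZM AM JZ2A.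
have JZA_K : (br (J Z) A <= K)%MS by rewrite (hd_mm HD) ?Jop_subM.
have J_adZ_adJZ_A : J (br Z (br (J Z) A)) = nu *: A by rewrite Jop_br_K.
rewrite br_Jop_r // brNr -[RHS]brZr -J_adZ_adJZ_A (hd_J2 HD) //.
exact: br_subM_K.
Qed.

Lemma ad2_JZ_JA {Z A : 'rV[R]_n} {nu : R} : (Z <= M)%MS -> (A <= M)%MS ->
  ad br Z 2 A = nu *: A -> ad br (J Z) 2 (J A) = nu *: J A.
Proof.
rewrite /ad /= => ZM AM Z2A.
rewrite br_Jop_r ?Jop_subM // Jop_Jop // brNl opprK.
rewrite -Jop_br_K ?(hd_mm HD) // Z2A; exact: brZr.
Qed.

Lemma cvg_partial_sums_eigen {Y X : 'rV[R]_n} {nu : R} :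
  0 <= nu -> ad br Y 2 X = nu *: X ->
  E_partial br Y X @ \oo --> sinhc nu *: X
  /\ S_partial br Y X @ \oo --> coshR (Num.sqrt nu) *: X.
Proof.
move=> nu_ge0 Y2X; split.
  exact: (cvg_sinhc_iter_even (brZr Y) nu_ge0 Y2X).
exact: (cvg_cosh_iter_even (brZr Y) nu_ge0 Y2X).
Qed.

End HermitianData.

Theorem theorem5p2 (R : realType) (n : nat)
  (br : 'rV[R]_n -> 'rV[R]_n -> 'rV[R]_n) (K M : 'M[R]_n) (Ups : 'rV[R]_n)
  (HD : hermitian_data br K M Ups)
  (Z A : 'rV[R]_n) (nu1 nu2 : R)
  (HZ : (Z <= M)%MS) (HA : (A <= M)%MS)
  (Hnu1 : 0 <= nu1) (Hnu2 : 0 <= nu2)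
  (H1 : ad br Z 2 A = nu1 *: A)
  (H2 : ad br (Jop br Ups Z) 2 A = nu2 *: A) :
  let JZ := Jop br Ups Z in
  let JA := Jop br Ups A in
  (E_partial br Z A @ \oo --> sinhc nu1 *: A
  /\ E_partial br JZ A @ \oo --> sinhc nu2 *: A
  /\ S_partial br Z A @ \oo --> coshR (Num.sqrt nu1) *: A
  /\ S_partial br JZ A @ \oo --> coshR (Num.sqrt nu2) *: A
  /\ E_partial br Z JA @ \oo --> sinhc nu2 *: JA
  /\ E_partial br JZ JA @ \oo --> sinhc nu1 *: JA
  /\ S_partial br Z JA @ \oo --> coshR (Num.sqrt nu2) *: JA
  /\ S_partial br JZ JA @ \oo --> coshR (Num.sqrt nu1) *: JA).
Proof.
move=> JZ JA.
have [EZA SZA] := cvg_partial_sums_eigen HD Hnu1 H1.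
have [EJZA SJZA] := cvg_partial_sums_eigen HD Hnu2 H2.
have [EZJA SZJA] := cvg_partial_sums_eigen HD Hnu2 (ad2_Z_JA HD HZ HA H2).
have [EJZJA SJZJA] := cvg_partial_sums_eigen HD Hnu1 (ad2_JZ_JA HD HZ HA H1).
by do !split.
Qed.
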